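(* Let $d\ge 2$ and let $\rho$ be a diagonal symmetric state on $\mathbb{C}^d\otimes\mathbb{C}^d$ that is PPT, with associated matrix $M=M(\rho)$. Let $\ket{u}=\frac{1}{\sqrt d}(1,\dots,1)^T\in\mathbb{R}^d$ and let $M^{+}$ denote the Moore–Penrose pseudo-inverse of $M$. Suppose there exists $\varepsilon\ge 0$ such that (1) $\varepsilon\le M_{ij}$ for all $0\le i,j<d$; (2) $\ket{u}$ lies in the range of $M$ and $\varepsilon d\le \left(\bra{u}M^{+}\ket{u}\right)^{-1}$; (3) for all $0\le i<d$, $M_{ii}+\varepsilon(d-2)\ge\sum_{j\ne i}M_{ji}$. Then $\rho$ is separable.
   Context: Let $\{\ket{0},\dots,\ket{d-1}\}$ be the computational basis of $\mathbb{C}^d$. Define $\ket{D_{ii}}=\ket{ii}$ and, for $i<j$, $\ket{D_{ij}}=(\ket{ij}+\ket{ji})/\sqrt{2}$. A state $\rho$ on $\mathbb{C}^d\otimes\mathbb{C}^d$ is diagonal symmetric (DS) if $\rho=\sum_{0\le i\le j<d}p_{ij}\ket{D_{ij}}\bra{D_{ij}}$ with $p_{ij}\ge 0$ and $\sum_{i\le j}p_{ij}=1$; set $p_{ji}=p_{ij}$. Its associated matrix $M(\rho)$ is the real symmetric $d\times d$ matrix with $M(\rho)_{ii}=p_{ii}$ and $M(\rho)_{ij}=p_{ij}/2$ for $i\ne j$ (the paper writes $\rho_{ij}$ for the entries of $M(\rho)$). $\rho$ is PPT if its partial transpose with respect to the computational basis of the second factor is positive semidefinite. A state is separable if it is a convex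 combination of product states $\rho^A\otimes\rho^B$. *)

(* Complex numbers are R[i] (mathcomp-real-closed) over an
   arbitrary R : realType (the real numbers, up to isomorphism). *)
From HB Require Import structures.
From mathcomp Require Import all_boot all_order all_algebra.
From mathcomp Require Import complex mxtens.
From mathcomp Require Import reals.
Set Implicit Arguments. Unset Strict Implicit. Unset Printing Implicit Defensive.
Import Order.TTheory GRing.Theory Num.Theory.
Local Open Scope ring_scope.

Definition cr {R : realType} (x : R) : R[i] := Complex x 0.

Definition adj {R : realType} {m n : nat} (A : 'M[R[i]]_(m, n)) : 'M[R[i]]_(n, m) :=
  \matrix_(i, j) Num.conj (A j i).

Definition psd {R : realType} {n : nat} (A : 'M[R[i]]_n) : Prop :=
  adj A = A /\ forall v : 'cV[R[i]]_n, 0 <= (adj v *m A *m v) 0 0.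

Definition is_state {R : realType} {n : nat} (A : 'M[R[i]]_n) : Prop :=
  psd A /\ \tr A = 1.

Definition ket {R : realType} {d : nat} (i : 'I_d) : 'cV[R[i]]_d := delta_mx i 0.

Definition ket2 {R : realType} {d : nat} (i j : 'I_d) : 'cV[R[i]]_(d * d) :=
  ket i *t ket j.
Definition pidx {d : nat} (i j : 'I_d) : 'I_(d * d) := mxtens_index (i, j).

Definition Dket {R : realType} {d : nat} (i j : 'I_d) : 'cV[R[i]]_(d * d) :=
  if i == j then ket2 i i
  else (sqrtC (2 : R[i]))^-1 *: (ket2 i j + ket2 j i).

Definition DSstate {R : realType} {d : nat} (p : 'I_d -> 'I_d -> R) : 'M[R[i]]_(d * d) :=
  \sum_(i < d) \sum_(j < d | (i <= j)%N) cr (p i j) *: (Dket i j *m adj (Dket i j)).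

(* p is a valid coefficient family for a DS state: p_ij >= 0 and sum_{i<=j} p_ij = 1
   (only entries with i <= j are used) *)
Definition DS_coeffs {R : realType} {d : nat} (p : 'I_d -> 'I_d -> R) : Prop :=
  (forall i j : 'I_d, (i <= j)%N -> 0 <= p i j) /\
  \sum_(i < d) \sum_(j < d | (i <= j)%N) p i j = 1.

Definition assocM {R : realType} {d : nat} (p : 'I_d -> 'I_d -> R) : 'M[R]_d :=
  \matrix_(i, j) (if i == j then p i i
                  else if (i < j)%N then p i j / 2 else p j i / 2).

Definition ptB {R : realType} {d : nat} (A : 'M[R[i]]_(d * d)) : 'M[R[i]]_(d * d) :=
  \sum_(i < d) \sum_(j < d) \sum_(k < d) \sum_(l < d)
     A (pidx i j) (pidx k l) *: delta_mx (pidx i l) (pidx k j).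

Definition PPT {R : realType} {d : nat} (A : 'M[R[i]]_(d * d)) : Prop := psd (ptB A).

Definition separable {R : realType} {d : nat} (A : 'M[R[i]]_(d * d)) : Prop :=
  exists (n : nat) (w : 'I_n -> R) (a b : 'I_n -> 'M[R[i]]_d),
    (forall k, 0 <= w k) /\ \sum_(k < n) w k = 1 /\
    (forall k, is_state (a k)) /\ (forall k, is_state (b k)) /\
    A = \sum_(k < n) cr (w k) *: (a k *t b k).

Definition MP_pinv {R : realType} {n : nat} (M X : 'M[R]_n) : Prop :=
  M *m X *m M = M /\ X *m M *m X = X /\
  (M *m X)^T = M *m X /\ (X *m M)^T = X *m M.

Definition uvec {R : realType} (d : nat) : 'cV[R]_d :=
  const_mx (Num.sqrt (d%:R : R))^-1.

(* Write DSmx N for the operator on C^d (x) C^d with <ab|DSmx N|ce> = N_ab when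
   {a,b} = {c,e} as multisets and 0 otherwise, so that rho = DSmx M(rho), and DSmx is
   linear.  For a row vector u >= 0, DSmx (u^T u) is separable: it is the average of
   |psi_k><psi_k| (x) |psi_k><psi_k| over psi_k = sum_t sqrt(u_t) i^(k_t) |t>,
   k in {0,1,2,3}^d, since averaging the phases i^(k_a + k_b - k_c - k_e) keeps exactly the
   entries with {a,b} = {c,e}.  Conditions (1) and (3) write
     M = eps 1^T 1 + sum_(i <> j) (M_ij - eps)/2 (e_i + e_j)^T (e_i + e_j) + sum_i l_i e_i^T e_i
   with l_i = M_ii + eps (d - 2) - sum_(j <> i) M_ji >= 0, a nonnegative combination of such
   matrices; Tr rho = 1 then normalises the resulting combination of product states. *)

From HB Require Import structures.
From mathcomp Require Import all_boot all_order all_algebra.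
From mathcomp Require Import complex mxtens.
From mathcomp Require Import reals.
From mathcomp Require Import ring lra.
Set Implicit Arguments. Unset Strict Implicit. Unset Printing Implicit Defensive.
Import Order.TTheory GRing.Theory Num.Theory.
Local Open Scope ring_scope.

(** * Fourth roots of unity *)

Lemma sum_unity_root (R : idomainType) n (z : R) :
  z ^+ n = 1 -> \sum_(i < n) z ^+ i = if z == 1 then n%:R else 0.
Proof.
move=> zn1; have [->|z_neq1] := eqVneq z 1.
  by rewrite (eq_bigr (fun _ => 1)) ?sumr_const ?card_ord // => i _; rewrite expr1n.
apply/eqP; move: (subrX1 z n); rewrite zn1 subrr => /esym/eqP.
by rewrite mulf_eq0 subr_eq0 (negbTE z_neq1).
Qed.

Lemma prodr_exp_count (R : comPzSemiRingType) (T : finType) (s : seq T) (F : T -> R) :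
  \prod_t F t ^+ count_mem t s = \prod_(t <- s) F t.
Proof.
elim: s => [|x s IHs]; first by rewrite big_nil big1 // => t _; rewrite expr0.
under eq_bigr => t _ do rewrite /= exprD.
rewrite big_split big_cons -IHs /= (bigD1 x) //= eqxx big1 ?mulr1 // => t.
by rewrite eq_sym => /negbTE ->.
Qed.

Lemma perm_eq_count_mem (T : finType) (s1 s2 : seq T) :
  perm_eq s1 s2 = [forall t, count_mem t s1 == count_mem t s2].
Proof.
apply/idP/forallP => [/permP eq_cnt t | eq_cnt]; first by rewrite eq_cnt.
by apply/allP => t _; exact: eq_cnt.
Qed.

Section FourthRoots.
Variable C : numClosedFieldType.

Lemma expCi4 : 'i ^+ 4 = 1 :> C.
Proof. by rewrite (exprM _ 2 2) sqrCi sqrrN expr1n. Qed.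

Lemma expCi_eq1 k : ('i ^+ k == 1 :> C) = (4 %| k)%N.
Proof.
rewrite {1}(divn_eq k 4) exprD mulnC exprM expCi4 expr1n mul1r /dvdn.
have : (k %% 4 < 4)%N by rewrite ltn_pmod.
have i_neq1 : 'i != 1 :> C by apply: (contraNneq _ (nonRealCi C)) => ->; exact: real1.
case: (k %% 4)%N => [|[|[|[|//]]]] _; rewrite ?eqxx //=.
- by rewrite expr1; apply/negbTE.
- by rewrite sqrCi -subr_eq0 -opprD oppr_eq0 -mulr2n pnatr_eq0.
- rewrite exprS sqrCi mulrN1 eqr_oppLR; apply/negbTE.
  by apply: (contraNneq _ (nonRealCi C)) => ->; rewrite rpredN real1.
Qed.

Lemma sum_phase_exp m n : (m <= 3)%N -> (n <= 3)%N ->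
  \sum_(z < 4) ('i ^+ z) ^+ m * ('i ^+ z)^* ^+ n = if m == n then 4 else 0 :> C.
Proof.
move=> m3 n3.
have conj_iz (z : nat) : ('i ^+ z)^* = 'i ^+ (3 * z) :> C.
  by rewrite rmorphXn /= conjCi exprM exprS sqrCi mulrN1.
rewrite (eq_bigr (fun z : 'I_4 => ('i ^+ (m + 3 * n)) ^+ z)); last first.
  by move=> z _; rewrite conj_iz -!exprM -exprD; congr (_ ^+ _); ring.
rewrite sum_unity_root ?expCi_eq1; last by rewrite -exprM mulnC exprM expCi4 expr1n.
by case: m n m3 n3 => [|[|[|[|//]]]] [|[|[|[|//]]]].
Qed.

Lemma sum_phases d (s1 s2 : seq 'I_d) : (size s1 <= 3)%N -> (size s2 <= 3)%N ->
  \sum_(k : {ffun 'I_d -> 'I_4})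
     (\prod_(t <- s1) 'i ^+ k t) * (\prod_(t <- s2) ('i ^+ k t)^*)
  = if perm_eq s1 s2 then 4 ^+ d else 0 :> C.
Proof.
move=> s1_small s2_small.
pose f t (z : 'I_4) := ('i ^+ z) ^+ count_mem t s1 * ('i ^+ z)^* ^+ count_mem t s2 : C.
transitivity (\sum_(k : {ffun 'I_d -> 'I_4}) \prod_t f t (k t)).
  by apply: eq_bigr => k _; rewrite big_split /= !prodr_exp_count.
rewrite -bigA_distr_bigA /=.
under eq_bigr => t _ do rewrite sum_phase_exp ?(leq_trans (count_size _ _)) //.
rewrite perm_eq_count_mem; case: ifPn => [/forallP eq_cnt | /forallPn [t neq_cnt]].
  by rewrite (eq_bigr (fun _ => 4)) ?prodr_const ?card_ord // => t _; rewrite eq_cnt.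
by rewrite (bigD1 t) //= (negbTE neq_cnt) mul0r.
Qed.

Lemma conj_sqrtC2V : ((sqrtC 2)^-1)^* = (sqrtC 2)^-1 :> C.
Proof. by rewrite conj_Creal // rpredV ger0_real // sqrtC_ge0 ler0n. Qed.

Lemma sqrtC2V_sqr : (sqrtC 2)^-1 * (sqrtC 2)^-1 = 2^-1 :> C.
Proof. by rewrite -invfM -expr2 sqrtCK. Qed.
End FourthRoots.

(** * Unordered pairs and symmetric matrices *)

Lemma perm_eq2 (T : eqType) (a b c e : T) :
  perm_eq [:: a; b] [:: c; e] = ((a == c) && (b == e)) || ((a == e) && (b == c)).
Proof.
have swap (x y : T) : perm_eq [:: x; y] [:: y; x] by apply/permP => P /=; rewrite addnCA.
have single (x y : T) : perm_eq [:: x] [:: y] = (x == y).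
  by apply/idP/eqP => [/perm_small_eq-/(_ isT) [] | ->].
apply/idP/idP => [eq_ab_ce | /orP [/andP [/eqP-> /eqP->] | /andP [/eqP-> /eqP->]] //].
have : a \in [:: c; e] by rewrite -(perm_mem eq_ab_ce) mem_head.
rewrite !inE => /orP [/eqP eq_ac | /eqP eq_ae]; apply/orP; [left | right];
  move: eq_ab_ce; rewrite -?eq_ac -?eq_ae eqxx /= -single.
  by rewrite perm_cons.
by move/perm_trans/(_ (swap _ _)); rewrite perm_cons.
Qed.

Lemma sum_upper_perm_eq (V : nmodType) d (F : 'I_d -> 'I_d -> V) (a b : 'I_d) :
  (forall i j, F i j = F j i) ->
  \sum_(i < d) \sum_(j < d | (i <= j)%N)
     (if perm_eq [:: a; b] [:: i; j] then F i j else 0) = F a b.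
Proof.
move=> F_sym; wlog le_ab : a b / (a <= b)%N => [hwlog|].
  have [/hwlog //|/ltnW/hwlog sum_ba] := leqP a b; rewrite F_sym -sum_ba.
  apply: eq_bigr => i _; apply: eq_bigr => j _.
  by rewrite -[[:: b; a]]/(rev [:: a; b]) perm_rev.
rewrite (pair_big_dep xpredT) /= -big_mkcondr (big_pred1 (a, b)) // => -[i j] /=.
rewrite perm_eq2 xpair_eqE [a == _]eq_sym [b == _]eq_sym.
apply/idP/idP => [/andP [le_ij /orP [//| /andP [/eqP eq_ja /eqP eq_ib]]] | ].
  move: le_ab; rewrite eq_ja eq_ib => le_ji.
  have eq_ij : i = j by apply/val_inj/eqP; rewrite eqn_leq le_ij le_ji.
  by rewrite eq_ij eqxx.
by case/andP => /eqP-> /eqP->; rewrite le_ab !eqxx.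
Qed.

Lemma sym_mx_decomp (F : numFieldType) d (B : 'M[F]_d) : B^T = B ->
  B = \sum_(i < d) \sum_(j < d | j != i)
          (B i j / 2) *: (('e_i + 'e_j : 'rV_d)^T *m ('e_i + 'e_j))
    + \sum_(i < d) (B i i - \sum_(j | j != i) B i j) *: (('e_i : 'rV_d)^T *m 'e_i).
Proof.
move=> B_sym.
have outer_pair i j : ('e_i + 'e_j : 'rV_d)^T *m ('e_i + 'e_j) =
    (delta_mx i i + delta_mx i j) + (delta_mx j i + delta_mx j j) :> 'M[F]_d.
  by rewrite [(_ + _)^T]raddfD /= mulmxDl !mulmxDr !trmx_delta !mul_delta_mx.
have swap (G : 'I_d -> 'I_d -> 'M[F]_d) :
    \sum_(i < d) \sum_(j < d | j != i) G i j = \sum_(i < d) \sum_(j < d | j != i) G j i.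
  rewrite (exchange_big_dep xpredT) //=.
  by apply: eq_bigr => i _; apply: eq_bigl => j; rewrite eq_sym.
have pairs : \sum_(i < d) \sum_(j < d | j != i)
      (B i j / 2) *: (('e_i + 'e_j : 'rV_d)^T *m ('e_i + 'e_j))
    = \sum_(i < d) \sum_(j < d | j != i) B i j *: (delta_mx i i + delta_mx i j).
  under eq_bigr => i _ do under eq_bigr => j _ do rewrite outer_pair scalerDr.
  under eq_bigr => i _ do rewrite big_split /=.
  rewrite big_split /= [X in _ + X]swap -big_split /=.
  apply: eq_bigr => i _; rewrite -big_split /=; apply: eq_bigr => j _.
  by rewrite -{2}B_sym mxE [delta_mx i i + _]addrC -scalerDl -splitr.
rewrite pairs {1}[B]matrix_sum_delta -big_split /=; apply: eq_bigr => i _.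
rewrite (bigD1 i) //=; under [in RHS]eq_bigr do rewrite scalerDr.
rewrite big_split /= -scaler_suml scalerBl trmx_delta mul_delta_mx.
by rewrite addrAC [_ *: _ + (_ - _)]addrC subrK.
Qed.

(** * Tensor products and the separable cone *)

Lemma scale_tensmx (R : comPzRingType) m n p q (a b : R)
    (A : 'M[R]_(m, n)) (B : 'M[R]_(p, q)) :
  (a *: A) *t (b *: B) = (a * b) *: (A *t B).
Proof.
apply/matrixP => r s; case: (mxtens_indexP r) => i j; case: (mxtens_indexP s) => k l.
by rewrite !mxE !mxtens_indexK mulrACA.
Qed.

Lemma mxtrace_tens (R : comPzRingType) m n (A : 'M[R]_m) (B : 'M[R]_n) :
  \tr (A *t B) = \tr A * \tr B.
Proof.
rewrite /mxtrace (reindex (@mxtens_index m n)); last first.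
  by exists (@mxtens_unindex m n) => ? _; rewrite (mxtens_indexK, mxtens_unindexK).
by rewrite big_distrlr pair_bigA; apply: eq_bigr => -[i j] _; rewrite tensmxE.
Qed.

HB.instance Definition _ (R : realType) :=
  GRing.RMorphism.copy (@cr R) (real_complex R).

Section ComplexMatrices.
Variable R : realType.
Local Notation C := R[i].

Lemma cr_ge0 (x : R) : (0 <= cr x) = (0 <= x).
Proof. exact: ler0c. Qed.

Lemma cr_gt0 (x : R) : (0 < cr x) = (0 < x).
Proof. exact: ltcR. Qed.

Lemma conj_cr (x : R) : (cr x)^* = cr x.
Proof. exact: conjc_real. Qed.

Lemma adjE m n (A : 'M[C]_(m, n)) : adj A = (map_mx Num.conj A)^T.
Proof. by apply/matrixP => i j; rewrite !mxE. Qed.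

Lemma adjK m n (A : 'M[C]_(m, n)) : adj (adj A) = A.
Proof. by apply/matrixP => i j; rewrite !mxE conjCK. Qed.

Lemma adjM m n p (A : 'M[C]_(m, n)) (B : 'M[C]_(n, p)) :
  adj (A *m B) = adj B *m adj A.
Proof. by rewrite !adjE map_mxM trmx_mul. Qed.

Lemma adjZ m n c (A : 'M[C]_(m, n)) : adj (c *: A) = c^* *: adj A.
Proof. by apply/matrixP => i j; rewrite !mxE rmorphM. Qed.

Lemma adjD m n (A B : 'M[C]_(m, n)) : adj (A + B) = adj A + adj B.
Proof. by apply/matrixP => i j; rewrite !mxE rmorphD. Qed.

Lemma adj_delta m n (i : 'I_m) (j : 'I_n) :
  adj (delta_mx i j) = delta_mx j i :> 'M[C]_(n, m).
Proof. by apply/matrixP => r s; rewrite !mxE conjC_nat andbC. Qed.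

Lemma psd_outer n (psi : 'cV[C]_n) : psd (psi *m adj psi).
Proof.
split=> [|v]; first by rewrite adjM adjK.
rewrite mulmxA -mulmxA -[adj psi *m v]adjK adjM adjK.
by rewrite mxE big_ord1 !mxE mul_conjC_ge0.
Qed.

Lemma psdZ n c (A : 'M[C]_n) : 0 <= c -> psd A -> psd (cr c *: A).
Proof.
move=> c_ge0 [A_herm A_ge0]; split=> [|v]; first by rewrite adjZ conj_cr A_herm.
by rewrite -scalemxAr -scalemxAl mxE mulr_ge0 ?cr_ge0.
Qed.

Lemma adj_mul_self_ge0 n (psi : 'cV[C]_n) : 0 <= (adj psi *m psi) 0 0.
Proof. by rewrite mxE sumr_ge0 // => t _; rewrite !mxE mulrC mul_conjC_ge0. Qed.

Lemma adj_mul_self_eq0 n (psi : 'cV[C]_n) : (adj psi *m psi) 0 0 = 0 -> psi = 0.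
Proof.
rewrite mxE => /eqP; rewrite psumr_eq0 => [/allP psi0|t _]; last first.
  by rewrite !mxE mulrC mul_conjC_ge0.
apply/matrixP => t k; rewrite ord1 mxE.
by move: (psi0 t (mem_index_enum t)); rewrite !mxE mulrC mul_conjC_eq0 => /eqP.
Qed.

Definition sep_cone d (A : 'M[C]_(d * d)) : Prop :=
  exists (n : nat) (w : 'I_n -> R) (a b : 'I_n -> 'M[C]_d),
    [/\ forall k, 0 <= w k, forall k, is_state (a k), forall k, is_state (b k)
      & A = \sum_(k < n) cr (w k) *: (a k *t b k)].

Lemma sep_cone0 d : sep_cone (0 : 'M[C]_(d * d)).
Proof.
exists 0%N, (fun _ => 0), (fun _ => 0), (fun _ => 0).
by split; rewrite ?big_ord0 //; case.
Qed.

Lemma sep_coneD d (A B : 'M[C]_(d * d)) : sep_cone A -> sep_cone B -> sep_cone (A + B).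
Proof.
move=> [n [w [a [b [w_ge0 a_st b_st ->]]]]] [n' [w' [a' [b' [w'_ge0 a'_st b'_st ->]]]]].
pose glue T (f : 'I_n -> T) (f' : 'I_n' -> T) k :=
  match split k with inl i => f i | inr i => f' i end.
exists (n + n')%N, (glue _ w w'), (glue _ a a'), (glue _ b b').
split; try by move=> k; rewrite /glue; case: (split k).
by rewrite big_split_ord /glue; congr (_ + _); apply: eq_bigr => i _;
  rewrite ?(unsplitK (inl i)) ?(unsplitK (inr i)).
Qed.

Lemma sep_coneZ d c (A : 'M[C]_(d * d)) : 0 <= c -> sep_cone A -> sep_cone (cr c *: A).
Proof.
move=> c_ge0 [n [w [a [b [w_ge0 a_st b_st ->]]]]].
exists n, (fun k => c * w k), a, b; split=> // [k|]; first exact: mulr_ge0.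
by rewrite scaler_sumr; apply: eq_bigr => k _; rewrite scalerA rmorphM.
Qed.

Lemma sep_cone_sum d I (r : seq I) (P : pred I) (F : I -> 'M[C]_(d * d)) :
  (forall i, P i -> sep_cone (F i)) -> sep_cone (\sum_(i <- r | P i) F i).
Proof.
move=> F_sep; elim/big_rec: _ => [|i A Pi A_sep]; first exact: sep_cone0.
by apply: sep_coneD => //; exact: F_sep.
Qed.

Lemma sep_cone_tens_outer d (psi : 'cV[C]_d) :
  sep_cone ((psi *m adj psi) *t (psi *m adj psi)).
Proof.
have [/adj_mul_self_eq0-> | norm_neq0] := eqVneq ((adj psi *m psi) 0 0) 0.
  by rewrite mul0mx tens0mx; exact: sep_cone0.
set r := complex.Re ((adj psi *m psi) 0 0).
have normE : (adj psi *m psi) 0 0 = cr r.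
  by rewrite [RHS]RRe_real ?ger0_real ?adj_mul_self_ge0.
have r_gt0 : 0 < r by rewrite -cr_gt0 -normE lt0r norm_neq0 adj_mul_self_ge0.
pose a := cr r^-1 *: (psi *m adj psi).
have a_state : is_state a.
  split; first by apply/psdZ/psd_outer; rewrite invr_ge0 ltW.
  rewrite mxtraceZ mxtrace_mulC /mxtrace big_ord1 normE -rmorphM mulVf ?rmorph1 //.
  by rewrite gt_eqF.
exists 1%N, (fun _ => r ^+ 2), (fun _ => a), (fun _ => a).
split=> // [k|]; first by rewrite exprn_ge0 ?ltW.
rewrite big_ord1 scale_tensmx scalerA -!rmorphM -invfM -expr2.
by rewrite mulfV ?expf_neq0 ?gt_eqF // rmorph1 scale1r.
Qed.

Lemma separable_of_sep_cone d (A : 'M[C]_(d * d)) : sep_cone A -> \tr A = 1 -> separable A.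
Proof.
move=> [n [w [a [b [w_ge0 a_st b_st A_def]]]]] trA1.
exists n, w, a, b; do !split=> //; apply: (@complexI R).
rewrite [RHS]rmorph1 -trA1 A_def !raddf_sum /=; apply: eq_bigr => k _.
by rewrite mxtraceZ mxtrace_tens (proj2 (a_st k)) (proj2 (b_st k)) !mulr1.
Qed.

(** * Diagonal symmetric operators *)

Lemma tens_matrixP d (A B : 'M[C]_(d * d)) :
  (forall a b c e, A (pidx a b) (pidx c e) = B (pidx a b) (pidx c e)) -> A = B.
Proof.
move=> eqAB; apply/matrixP => r s.
by case: (mxtens_indexP r) => a b; case: (mxtens_indexP s) => c e; exact: eqAB.
Qed.

Definition DSmx d (N : 'M[R]_d) : 'M[C]_(d * d) :=
  \matrix_(r, s)
    let: (a, b) := mxtens_unindex r in let: (c, e) := mxtens_unindex s in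
    if perm_eq [:: a; b] [:: c; e] then cr (N a b) else 0.

Lemma DSmxE d (N : 'M[R]_d) a b c e :
  DSmx N (pidx a b) (pidx c e) = if perm_eq [:: a; b] [:: c; e] then cr (N a b) else 0.
Proof. by rewrite mxE !mxtens_indexK. Qed.

Lemma DSmx0 d : DSmx (0 : 'M[R]_d) = 0.
Proof.
by apply: tens_matrixP => a b c e; rewrite DSmxE !mxE rmorph0; case: ifP.
Qed.

Lemma DSmxD d (N N' : 'M[R]_d) : DSmx (N + N') = DSmx N + DSmx N'.
Proof.
apply: tens_matrixP => a b c e; rewrite DSmxE [RHS]mxE !DSmxE mxE rmorphD.
by case: ifP; rewrite ?addr0.
Qed.

Lemma DSmxZ d c (N : 'M[R]_d) : DSmx (c *: N) = cr c *: DSmx N.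
Proof.
apply: tens_matrixP => a b c' e; rewrite DSmxE [RHS]mxE !DSmxE mxE rmorphM.
by case: ifP; rewrite ?mulr0.
Qed.

Lemma DSmx_sum d I (r : seq I) (P : pred I) (F : I -> 'M[R]_d) :
  DSmx (\sum_(i <- r | P i) F i) = \sum_(i <- r | P i) DSmx (F i).
Proof. exact: (big_morph _ (@DSmxD d) (DSmx0 d)). Qed.

Definition phase_vec d (u : 'rV[R]_d) (k : {ffun 'I_d -> 'I_4}) : 'cV[C]_d :=
  \col_t (cr (Num.sqrt (u 0 t)) * 'i ^+ k t).

Lemma DSmx_outer_avg d (u : 'rV[R]_d) : (forall t, 0 <= u 0 t) ->
  DSmx (u^T *m u) = \sum_k cr (4 ^- d) *:
    ((phase_vec u k *m adj (phase_vec u k)) *t (phase_vec u k *m adj (phase_vec u k))).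
Proof.
move=> u_ge0; apply: tens_matrixP => a b c e.
pose s t := Num.sqrt (u 0 t).
have s_sqr t : s t * s t = u 0 t by rewrite -expr2 sqr_sqrtr.
rewrite DSmxE summxE.
transitivity (cr (4 ^- d * (s a * s b * s c * s e)) *
  \sum_(k : {ffun 'I_d -> 'I_4})
     (\prod_(t <- [:: a; b]) 'i ^+ k t) * (\prod_(t <- [:: c; e]) ('i ^+ k t)^*)).
  rewrite sum_phases //; case: ifP => [perm_ab_ce|]; last by rewrite mulr0.
  have -> : s a * s b * s c * s e = u 0 a * u 0 b.
    move: perm_ab_ce; rewrite perm_eq2 => /orP [] /andP [/eqP<- /eqP<-].
      by rewrite -mulrA mulrACA !s_sqr.
    by rewrite -mulrA [s b * s a]mulrC mulrACA !s_sqr.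
  have pow4 : 4 ^+ d = cr (4 ^+ d : R) by rewrite rmorphXn rmorph_nat.
  rewrite mxE big_ord1 !mxE pow4 -rmorphM mulrAC mulVf ?mul1r //.
  by rewrite expf_neq0 // pnatr_eq0.
rewrite mulr_sumr; apply: eq_bigr => k _.
rewrite !mxE !mxtens_indexK /= !big_ord1 !mxE !big_cons !big_nil !rmorphM /= !conj_cr /s.
ring.
Qed.

Lemma sep_cone_DSmx_outer d (u : 'rV[R]_d) :
  (forall t, 0 <= u 0 t) -> sep_cone (DSmx (u^T *m u)).
Proof.
move=> u_ge0; rewrite DSmx_outer_avg //; apply: sep_cone_sum => k _.
by apply/sep_coneZ/sep_cone_tens_outer; rewrite invr_ge0 exprn_ge0.
Qed.

Lemma sep_cone_DSmx_dominant d (M : 'M[R]_d) eps :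
  M^T = M -> 0 <= eps -> (forall i j, eps <= M i j) ->
  (forall i, \sum_(j | j != i) M j i <= M i i + eps * (d%:R - 2)) ->
  sep_cone (DSmx M).
Proof.
move=> M_sym eps_ge0 eps_le dominant.
pose J : 'M[R]_d := (const_mx 1 : 'rV_d)^T *m const_mx 1.
pose B := M - eps *: J.
have BE i j : B i j = M i j - eps by rewrite !mxE big_ord1 !mxE !mulr1.
have B_sym : B^T = B by apply/matrixP => i j; rewrite mxE !BE -{1}M_sym mxE.
have -> : M = eps *: J + B by rewrite addrC subrK.
rewrite (sym_mx_decomp B_sym) !DSmxD !DSmx_sum DSmxZ.
have e_ge0 i t : 0 <= ('e_i : 'rV[R]_d) 0 t by rewrite mxE ler0n.
apply: sep_coneD; [|apply: sep_coneD; apply: sep_cone_sum => i _].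
- by apply/sep_coneZ/sep_cone_DSmx_outer => // t; rewrite mxE.
- rewrite DSmx_sum; apply: sep_cone_sum => j _; rewrite DSmxZ.
  apply/sep_coneZ/sep_cone_DSmx_outer => [|t]; last by rewrite mxE addr_ge0.
  by rewrite BE divr_ge0 ?subr_ge0.
rewrite DSmxZ; apply/sep_coneZ/sep_cone_DSmx_outer => //.
have card_neq : #|[pred j : 'I_d | j != i]| = d.-1 by rewrite cardC1 card_ord.
have d_pos : (0 < d)%N by apply: leq_ltn_trans (ltn_ord i).
rewrite subr_ge0 (eq_bigr (fun j => M j i - eps)) => [|j _]; last first.
  by rewrite BE -{1}M_sym mxE.
rewrite sumrB sumr_const card_neq BE.
have d_eq : d%:R = (d.-1)%:R + 1 :> R by rewrite -mulrSr prednK.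
move: (dominant i); rewrite d_eq -mulr_natr; lra.
Qed.

Lemma pidx_eq d (a b c e : 'I_d) : (pidx a b == pidx c e) = (a == c) && (b == e).
Proof. by rewrite (inj_eq (can_inj (@mxtens_indexK d d))). Qed.

Lemma ket2E d (i j : 'I_d) : ket2 i j = delta_mx (pidx i j) 0 :> 'cV[C]_(d * d).
Proof.
apply/matrixP => r k; case: (mxtens_indexP r) => a b.
have k0 : k = 0 by apply/val_inj; case: k => -[].
rewrite !mxE !mxtens_indexK -/(pidx a b) pidx_eq k0 !eqxx !andbT /=.
by rewrite -natrM mulnb.
Qed.

Definition dicke_amp d (i j : 'I_d) : C := if i == j then 1 else (sqrtC 2)^-1.

Lemma DketE d (i j a b : 'I_d) :
  Dket i j (pidx a b) 0 = dicke_amp i j * (perm_eq [:: a; b] [:: i; j])%:R.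
Proof.
rewrite /Dket /dicke_amp perm_eq2; case: (eqVneq i j) => [<-|neq_ij].
  by rewrite ket2E mxE pidx_eq eqxx andbT orbb mul1r.
rewrite !ket2E !mxE !pidx_eq !andbT; congr (_ * _).
have : ~~ (((a == i) && (b == j)) && ((a == j) && (b == i))).
  by apply: contra neq_ij => /andP [/andP [/eqP <- _] /andP [/eqP <- _]].
by case: ((a == i) && _); case: ((a == j) && _); rewrite //= ?addr0 ?add0r.
Qed.

Lemma Dket_outerE d (i j a b c e : 'I_d) :
  (Dket i j *m adj (Dket i j)) (pidx a b) (pidx c e) =
  cr (if i == j then 1 else 2^-1 : R)
    * (perm_eq [:: a; b] [:: c; e] && perm_eq [:: a; b] [:: i; j])%:R.
Proof.
have amp2 : dicke_amp i j * (dicke_amp i j)^* = cr (if i == j then 1 else 2^-1 : R).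
  rewrite /dicke_amp; case: eqVneq => _; first by rewrite !rmorph1 mulr1.
  by rewrite conj_sqrtC2V sqrtC2V_sqr fmorphV rmorph_nat.
rewrite mxE big_ord1 !mxE !DketE rmorphM /= conjC_nat mulrACA amp2; congr (_ * _).
have [perm_ab_ij|] := boolP (perm_eq [:: a; b] [:: i; j]); last by rewrite andbF mul0r.
by rewrite -(permPr perm_ab_ij) (perm_sym [:: c; e]) andbT mul1r.
Qed.

Lemma assocM_sym d (p : 'I_d -> 'I_d -> R) : (assocM p)^T = assocM p.
Proof.
apply/matrixP => i j; rewrite !mxE eq_sym; case: eqVneq => [-> //|neq_ij].
by case: ltngtP => // /val_inj eq_ij; rewrite eq_ij eqxx in neq_ij.
Qed.

Lemma DSstateE d (p : 'I_d -> 'I_d -> R) : DSstate p = DSmx (assocM p).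
Proof.
apply: tens_matrixP => a b c e; rewrite DSmxE summxE.
under eq_bigr => i _ do (rewrite summxE; under eq_bigr => j _ do rewrite mxE Dket_outerE).
case: ifP => perm_ab_ce /=; last first.
  by apply: big1 => i _; apply: big1 => j _; rewrite !mulr0.
rewrite -(@sum_upper_perm_eq _ _ (fun i j => cr (assocM p i j)) a b); last first.
  by move=> i j; rewrite -[in LHS](assocM_sym p) mxE.
apply: eq_bigr => i _; apply: eq_bigr => j le_ij; rewrite mulrA -rmorphM mxE.
case: (perm_eq _ _); rewrite ?mulr0 ?mulr1 //; congr cr.
case: eqVneq => [->|neq_ij]; first by rewrite mulr1.
suff -> : (i < j)%N by [].
by rewrite ltn_neqAle le_ij andbT; exact: neq_ij.
Qed.

Lemma Dket_unit d (i j : 'I_d) : adj (Dket i j : 'cV[C]_(d * d)) *m Dket i j = 1.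
Proof.
have delta00 : delta_mx 0 0 = 1 :> 'M[C]_1 by apply/matrixP => r s; rewrite !ord1 !mxE.
rewrite /Dket; case: eqVneq => [_|neq_ij]; first by rewrite ket2E adj_delta mul_delta_mx.
rewrite !ket2E adjZ adjD !adj_delta -scalemxAl -scalemxAr scalerA mulrC.
rewrite conj_sqrtC2V sqrtC2V_sqr mulmxDl !mulmxDr !mul_delta_mx_cond !pidx_eq !eqxx.
rewrite (negbTE neq_ij) eq_sym (negbTE neq_ij) /= !mulr0n !mulr1n addr0 add0r delta00.
by rewrite scalerDr -scalerDl -div1r -splitr scale1r.
Qed.

Lemma tr_DSstate d (p : 'I_d -> 'I_d -> R) : DS_coeffs p -> \tr (DSstate p) = 1.
Proof.
move=> [_ sum_p1]; rewrite -[RHS](rmorph1 (@cr R)) -sum_p1 rmorph_sum raddf_sum /=.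
apply: eq_bigr => i _; rewrite rmorph_sum raddf_sum /=; apply: eq_bigr => j _.
by rewrite mxtraceZ mxtrace_mulC Dket_unit mxtrace1 mulr1.
Qed.

End ComplexMatrices.

Theorem theorem5 (R : realType) (d : nat) (p : 'I_d -> 'I_d -> R) :
  (2 <= d)%N ->
  DS_coeffs p ->
  PPT (DSstate p) ->
  (exists eps : R,
     0 <= eps /\
     (forall i j : 'I_d, eps <= assocM p i j) /\
     (exists v : 'cV[R]_d, assocM p *m v = uvec d) /\
     (exists X : 'M[R]_d, MP_pinv (assocM p) X /\
        eps * d%:R <= (((uvec d)^T *m X *m uvec d) 0 0)^-1) /\
     (forall i : 'I_d,
        assocM p i i + eps * (d%:R - 2) >= \sum_(j < d | j != i) assocM p j i)) ->
  separable (DSstate p).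
Proof.
move=> _ p_coeffs _ [eps [eps_ge0 [eps_le [_ [_ dominant]]]]].
apply: separable_of_sep_cone; last exact: tr_DSstate.
by rewrite DSstateE; apply: sep_cone_DSmx_dominant (assocM_sym p) eps_ge0 eps_le dominant.
Qed.
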